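(* Let $G$ be a connected threshold graph of order $n\ge 4$ and size $m$ with $n-1<m<\binom{n}{2}$, let $c$ be its number of type 1 vertices, $(b_1,\ldots,b_z)$ its backwards zero position sequence, $F_1=\sum_{i=1}^z b_i^2$, and $\rho$ the spectral radius of its adjacency matrix. Then \[\rho> c-1+\frac{F_1}{n^2}.\]
   Context: A threshold graph is a simple graph whose vertices can be ordered $v_1,\ldots,v_n$ so that for each $2\le i\le n$, $v_i$ is either adjacent to all of $v_1,\ldots,v_{i-1}$ (then $a_i=1$) or to none of them (then $a_i=0$); by convention $a_1=1$. Vertex $v_i$ is of type 1 if $a_i=1$ and of type 0 if $a_i=0$; $c$ and $z$ are the numbers of type 1 and type 0 vertices. The backwards zero position sequence $(b_1,\ldots,b_z)$ is defined by letting $b_i$ be the number of type 1 vertices appearing after the $i$-th type 0 vertex in the order $v_1,\ldots,v_n$. *)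

From mathcomp Require Import all_boot all_order all_algebra all_field.
Set Implicit Arguments. Unset Strict Implicit. Unset Printing Implicit Defensive.
Import Order.TTheory GRing.Theory Num.Theory.
Local Open Scope ring_scope.

(* A threshold graph on the vertex set 'I_n, with vertex i playing the role of
   v_(i+1) in the creation ordering, described by its creation sequence
   a : nat -> bool (a i = a_(i+1); only a 0, ..., a (n-1) matter). *)
Definition th_adj (n : nat) (a : nat -> bool) : rel 'I_n :=
  fun i j => (i != j) && a (maxn i j).

Definition th_adjmx (n : nat) (a : nat -> bool) : 'M[algC]_n :=
  \matrix_(i, j) (if th_adj a i j then 1 else 0 : algC).

Definition th_size (n : nat) (a : nat -> bool) : nat :=
  #|[set p : 'I_n * 'I_n | (p.1 < p.2)%N && th_adj a p.1 p.2]|.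

Definition th_connected (n : nat) (a : nat -> bool) : Prop :=
  forall i j : 'I_n, connect (th_adj a) i j.

Definition th_c (n : nat) (a : nat -> bool) : nat := count a (iota 0 n).

Definition th_bzps (n : nat) (a : nat -> bool) : seq nat :=
  [seq count a (iota i.+1 (n - i.+1)) | i <- [seq i <- iota 0 n | ~~ a i]].

Definition th_F1 (n : nat) (a : nat -> bool) : nat :=
  sumn [seq (b ^ 2)%N | b <- th_bzps n a].

Definition spectral_radius (n : nat) (A : 'M[algC]_n) (r : algC) : Prop :=
  (exists2 l, eigenvalue A l & `|l| = r) /\
  (forall l, eigenvalue A l -> `|l| <= r).

From mathcomp Require Import all_boot all_order all_algebra all_field zify.
Import Order.TTheory GRing.Theory Num.Theory.

(* Rayleigh quotient. Let b_v be the number of type 1 vertices after v and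
   take the test vector x_v = c - 1 for v of type 1, x_v = b_v for v of type 0.
   Every edge joins a vertex to a later type 1 vertex, so
   x A x^T = 2 (c - 1) sum_v x_v b_v = (c - 1) (|x|^2 + F1), using that the
   b_v of the type 1 vertices add up to c (c - 1) / 2.  Hence
   rho >= (c - 1) (1 + F1 / |x|^2).  Since v_1 has type 1, b_v <= c - 1, so
   |x|^2 = c (c - 1)^2 + F1 <= n (c - 1)^2 < (c - 1) n^2, which turns the
   bound into the claim as soon as F1 > 0; this holds because the graph is not
   complete and, being connected, ends with a type 1 vertex. *)

Lemma sum_sym_square n (f : 'I_n -> 'I_n -> nat) :
  (forall i k, f i k = f k i) ->
  \sum_(i < n) \sum_(k < n) f i k =
    \sum_(i < n) f i i + 2 * \sum_(i < n) \sum_(k < n | i < k) f i k.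
Proof.
move=> fC.
have split_row i : \sum_(k < n) f i k =
    f i i + \sum_(k < n | i < k) f i k + \sum_(k < n | k < i) f i k.
  rewrite (bigD1 i) //= (bigID (fun k : 'I_n => i < k)) /= addnA.
  congr (_ + _ + _); apply: eq_bigl => k; rewrite -val_eqE /=.
    by case: ltngtP.
  by case: ltngtP.
rewrite (eq_bigr _ (fun i _ => split_row i)) !big_split /= mul2n -addnn addnA.
congr (_ + _); rewrite (exchange_big_dep xpredT) //=.
by apply: eq_bigr => i _; apply: eq_bigr => k _; rewrite fC.
Qed.

Definition th_b n (a : nat -> bool) (j : nat) : nat := \sum_(k < n | j < k) a k.

Lemma count_iota_sum n (a : nat -> bool) m :
  count a (iota m (n - m)) = \sum_(k < n | m <= k) a k.
Proof.
rewrite -sum1_count big_mkcond /= -/(index_iota m n) big_geq_mkord.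
by apply: eq_big => // i _; case: (a i).
Qed.

Lemma th_c_sum n (a : nat -> bool) : th_c n a = \sum_(k < n) a k.
Proof. by rewrite /th_c -{1}(subn0 n) count_iota_sum. Qed.

Lemma th_c_card n (a : nat -> bool) : th_c n a = #|[pred k : 'I_n | a k]|.
Proof.
rewrite th_c_sum -sum1_card [RHS]big_mkcond /=.
by apply: eq_bigr => k _; rewrite inE; case: (a k).
Qed.

Lemma th_F1_sum n (a : nat -> bool) : th_F1 n a = \sum_(j < n | ~~ a j) th_b n a j ^ 2.
Proof.
rewrite /th_F1 /th_bzps -map_comp sumnE big_map big_filter.
rewrite -/(index_iota 0 n) -{1}(subn0 n) big_mkord.
by apply: eq_bigr => i _ /=; rewrite count_iota_sum.
Qed.

Lemma th_adjC n (a : nat -> bool) (i k : 'I_n) : th_adj a i k = th_adj a k i.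
Proof. by rewrite /th_adj eq_sym maxnC. Qed.

Lemma th_adj_lt n (a : nat -> bool) (i k : 'I_n) : i < k -> th_adj a i k = a k.
Proof. by move=> ltik; rewrite /th_adj neq_ltn ltik (maxn_idPr (ltnW ltik)). Qed.

Lemma th_size_sum n (a : nat -> bool) : th_size n a = \sum_(i < n) th_b n a i.
Proof.
rewrite /th_size -sum1_card pair_big_dep /= big_mkcond [RHS]big_mkcond /=.
apply: eq_bigr => -[i k] _; rewrite inE /=.
by case: ltnP => //= /th_adj_lt ->; case: (a k).
Qed.

Lemma th_pairs n (a : nat -> bool) :
  (\sum_(i < n | a i) th_b n a i) * 2 = th_c n a * (th_c n a).-1.
Proof.
have := @sum_sym_square n (fun i k : 'I_n => a i * a k) (fun i k => mulnC _ _).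
rewrite -(eq_bigr _ (fun i _ => big_distrr _ _ _)) -big_distrl -th_c_sum /=.
have -> : \sum_(i < n) a i * a i = th_c n a.
  by rewrite th_c_sum; apply: eq_bigr => i _; case: (a i).
have -> : \sum_(i < n) \sum_(k < n | i < k) a i * a k = \sum_(i < n | a i) th_b n a i.
  rewrite [RHS]big_mkcond; apply: eq_bigr => i _.
  by rewrite -big_distrr /=; case: (a i) => /=; rewrite ?mul1n ?mul0n.
by move=> sq; rewrite -subn1 mulnBr muln1 sq addKn mulnC.
Qed.

Lemma th_size_complete n (a : nat -> bool) :
  (forall i : 'I_n, a i) -> th_size n a = 'C(n, 2).
Proof.
move=> all_a.
have c_n : th_c n a = n.
  rewrite th_c_sum -[RHS]card_ord -sum1_card.
  by apply: eq_bigr => i _; rewrite all_a.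
rewrite bin2; have -> : n * n.-1 = th_c n a * (th_c n a).-1 by rewrite c_n.
by rewrite th_size_sum -th_pairs (eq_bigl _ _ all_a) muln2 doubleK.
Qed.

Lemma th_connected_last n (a : nat -> bool) :
  1 < n -> th_connected n a -> a n.-1.
Proof.
move=> n_gt1 conn; have last_lt : n.-1 < n by lia.
have first_lt : 0 < n by lia.
have /connectP [[|q p] /= path_p last_p] := conn (Ordinal last_lt) (Ordinal first_lt).
  by move/(congr1 val): last_p => /=; lia.
have q_le : q <= n.-1 by rewrite -ltnS prednK // ltn_ord.
by case/andP: path_p => /andP [_]; rewrite /= (maxn_idPl q_le).
Qed.

Lemma th_c_le n (a : nat -> bool) : th_c n a <= n.
Proof. by rewrite /th_c -[leqRHS](size_iota 0 n) count_size. Qed.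

Lemma th_b_le n (a : nat -> bool) j : a 0 -> th_b n a j <= (th_c n a).-1.
Proof.
move=> a0; rewrite th_c_sum /th_b big_mkcond /=.
case: n => [|n]; first by rewrite !big_ord0.
rewrite !big_ord_recl /= a0 add0n add1n /=.
by apply: leq_sum => k _; case: ifP.
Qed.

Lemma th_b_gt0 {n} {a : nat -> bool} (j : 'I_n) : ~~ a j -> a n.-1 -> 0 < th_b n a j.
Proof.
move=> aj a_last; have last_lt : n.-1 < n by move: (ltn_ord j); lia.
have j_lt : j < n.-1.
  rewrite ltn_neqAle -ltnS prednK ?ltn_ord 1?andbT; last by move: (ltn_ord j); lia.
  by apply: contraNneq aj => ->.
by rewrite /th_b (bigD1 (Ordinal last_lt)) //= a_last.
Qed.

Lemma th_F1_gt0 {n} {a : nat -> bool} (j : 'I_n) : ~~ a j -> a n.-1 -> 0 < th_F1 n a.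
Proof.
move=> aj a_last; rewrite th_F1_sum (bigD1 j) //=.
by rewrite ltn_addr // expn_gt0 th_b_gt0.
Qed.

Lemma th_F1_le n (a : nat -> bool) :
  a 0 -> th_F1 n a <= (n - th_c n a) * (th_c n a).-1 ^ 2.
Proof.
move=> a0; have zeros : #|[pred j : 'I_n | ~~ a j]| = n - th_c n a.
  have := cardC [pred k : 'I_n | a k]; rewrite card_ord -th_c_card.
  by rewrite (@eq_card _ _ [predC [pred k : 'I_n | a k]]) => [|j]; [lia | rewrite !inE].
rewrite th_F1_sum -zeros -sum1_card big_distrl /=.
by apply: leq_sum => j _; rewrite mul1n leq_exp2r // th_b_le.
Qed.

Definition th_weight n (a : nat -> bool) j : nat :=
  if a j then (th_c n a).-1 else th_b n a j.

Lemma th_weight_norm n (a : nat -> bool) :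
  \sum_(j < n) th_weight n a j ^ 2 = th_c n a * (th_c n a).-1 ^ 2 + th_F1 n a.
Proof.
rewrite th_F1_sum {1}th_c_sum big_distrl /= [X in _ = _ + X]big_mkcond -big_split /=.
by apply: eq_bigr => j _; rewrite /th_weight; case: (a j) => /=; lia.
Qed.

Lemma th_weight_form n (a : nat -> bool) :
  \sum_(i < n) \sum_(k < n) th_weight n a i * th_adj a i k * th_weight n a k =
    (th_c n a).-1 * (\sum_(j < n) th_weight n a j ^ 2 + th_F1 n a).
Proof.
set w := th_weight n a; set K := (th_c n a).-1.
have row_sum (i : 'I_n) :
    \sum_(k < n | i < k) w i * th_adj a i k * w k = K * (w i * th_b n a i).
  rewrite /th_b !big_distrr /=; apply: eq_bigr => k lt_ik.
  by rewrite th_adj_lt // /w /th_weight; case: (a k) => /=; lia.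
have weighted_b :
    \sum_(i < n) w i * th_b n a i = K * \sum_(i < n | a i) th_b n a i + th_F1 n a.
  rewrite th_F1_sum big_distrr /= !(big_mkcond (fun i : 'I_n => a i)) /=.
  rewrite [X in _ = _ + X]big_mkcond -big_split /=.
  by apply: eq_bigr => i _; rewrite /w /th_weight; case: (a i) => /=; lia.
rewrite sum_sym_square => [|i k]; last by rewrite th_adjC; lia.
rewrite big1 => [|i _]; last by rewrite /th_adj eqxx muln0 mul0n.
rewrite (eq_bigr _ (fun i _ => row_sum i)) -big_distrr /= weighted_b th_weight_norm.
have := th_pairs n a; rewrite -/K; nia.
Qed.

Lemma th_weight_norm_lt n (a : nat -> bool) :
  a 0 -> 0 < (th_c n a).-1 -> \sum_(j < n) th_weight n a j ^ 2 < (th_c n a).-1 * n ^ 2.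
Proof.
move=> a0 K_gt0; rewrite th_weight_norm.
have c_le := th_c_le n a; have F1_le := th_F1_le n a a0.
set c := th_c n a in K_gt0 c_le F1_le *; set K := c.-1 in K_gt0 F1_le *.
have K_lt_n : K < n by rewrite /K; lia.
apply: (@leq_ltn_trans (n * K ^ 2)).
  by rewrite -{2}(subnKC c_le) mulnDl leq_add2l.
by rewrite mulnCA ltn_pmul2l ?ltn_pmul2l //; lia.
Qed.

Local Open Scope ring_scope.
Local Open Scope sesquilinear_scope.

Lemma hermitian_form_le_radius {C : numClosedFieldType} {n} (A : 'M[C]_n) rho
    (x : 'rV[C]_n) :
  A \is hermsymmx -> (forall l, eigenvalue A l -> `|l| <= rho) ->
  (x *m A *m x^t*) 0 0 <= rho * (x *m x^t*) 0 0.
Proof.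
move=> A_herm le_rho.
have /orthomx_spectralP A_diag := hermitian_normalmx A_herm.
set P := spectralmx A in A_diag; set d := spectral_diag A in A_diag.
have P_unit : P \in unitmx by apply: spectral_unit.
have PtP : P^t* *m P = 1%:M by apply: mulmx1C; apply/unitarymxP/spectral_unitarymx.
have d_eig j : eigenvalue A (d 0 j).
  apply/eigenvalueP; exists (row j P).
    rewrite -row_mul A_diag !mulmxA mulmxV // mul1mx row_mul row_diag_mx -scalemxAl.
    by rewrite rowE.
  apply/negP=> /eqP row0; have := mulmxK P_unit (delta_mx 0 j : 'rV_n).
  rewrite -rowE row0 mul0mx => /matrixP /(_ 0 j); rewrite !mxE !eqxx /=.
  by move=> /esym/eqP; rewrite oner_eq0.
set y := x *m P^t*.
have yC : y^t* = P *m x^t* by rewrite /y trmx_mul map_mxM trmxCK.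
have form_diag : x *m A *m x^t* = y *m diag_mx d *m y^t*.
  by rewrite yC A_diag invmx_unitary ?spectral_unitarymx // /y !mulmxA.
have norm_diag : x *m x^t* = y *m y^t*.
  by rewrite yC /y !mulmxA -(mulmxA x) PtP mulmx1.
rewrite form_diag norm_diag; clearbody y.
rewrite mul_mx_diag !mxE mulr_sumr; apply: ler_sum => k _.
rewrite !mxE mulrAC [leRHS]mulrC; apply: ler_wpM2l; first by rewrite -normCK exprn_ge0.
apply: le_trans (le_rho _ (d_eig k)).
by apply: real_ler_norm; apply: (mxOverP (hermitian_spectral_diag_real A_herm)).
Qed.

Lemma th_adjmx_hermitian n (a : nat -> bool) : th_adjmx n a \is hermsymmx.
Proof.
apply: realsym_hermsym.
  apply/is_hermitianmxP; rewrite expr0 scale1r; apply/matrixP => i j.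
  by rewrite !mxE th_adjC.
by apply/mxOverP => i j; rewrite mxE; case: ifP.
Qed.

Lemma th_adjmx_form n (a : nat -> bool) (w : nat -> nat) :
  let x := \row_(j < n) (w j)%:R in
  (x *m th_adjmx n a *m x^t*) 0 0 =
    (\sum_(i < n) \sum_(k < n) w i * th_adj a i k * w k)%N%:R.
Proof.
rewrite /= !mxE exchange_big natr_sum; apply: eq_bigr => k _.
rewrite !mxE mulr_suml natr_sum; apply: eq_bigr => i _.
by rewrite !mxE conjC_nat !natrM; case: (th_adj a i k).
Qed.

Lemma row_natr_norm n (w : nat -> nat) :
  let x := \row_(j < n) ((w j)%:R : algC) in
  (x *m x^t*) 0 0 = (\sum_(j < n) w j ^ 2)%N%:R.
Proof.
by rewrite /= !mxE natr_sum; apply: eq_bigr => j _; rewrite !mxE conjC_nat natrX.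
Qed.

Lemma rayleigh_gap (R : numFieldType) (K F N m rho : R) :
  0 < F -> 0 < N -> 0 < m -> N < K * m -> K * (N + F) <= rho * N ->
  K + F / m < rho.
Proof.
move=> F_gt0 N_gt0 m_gt0 N_lt form_le.
rewrite -(ltr_pM2r N_gt0); apply: lt_le_trans form_le.
rewrite mulrDl mulrDr ltrD2l mulrAC ltr_pdivrMr // [K * F]mulrC -mulrA.
by rewrite ltr_pM2l.
Qed.

Theorem corollary4p4 (n : nat) (a : nat -> bool) (rho : algC) :
  a 0%N = true ->
  (4 <= n)%N ->
  th_connected n a ->
  (n.-1 < th_size n a)%N ->
  (th_size n a < 'C(n, 2))%N ->
  spectral_radius (th_adjmx n a) rho ->
  (th_c n a)%:R - 1 + (th_F1 n a)%:R / (n%:R ^+ 2) < rho.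
Proof.
move=> a0 n_ge4 conn _ size_lt [_ le_rho].
have a_last : a n.-1 by apply: th_connected_last conn; lia.
have [j zero_j] : exists j : 'I_n, ~~ a j.
  apply/existsP; apply: contraTT size_lt => /existsPn all_a.
  by rewrite th_size_complete ?ltnn // => i; apply/negPn.
have K_gt0 : (0 < (th_c n a).-1)%N.
  exact: leq_trans (th_b_gt0 j zero_j a_last) (th_b_le n a j a0).
have := hermitian_form_le_radius _ _ (\row_j (th_weight n a j)%:R)
  (th_adjmx_hermitian n a) le_rho.
rewrite th_adjmx_form row_natr_norm th_weight_form.
have -> : (th_c n a)%:R - 1 = (th_c n a).-1%:R :> algC.
  by rewrite -[in LHS](prednK (leq_trans K_gt0 (leq_pred _))) -addn1 natrD addrK.
have F_gt0 := th_F1_gt0 j zero_j a_last.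
rewrite natrM natrD; apply: rayleigh_gap; rewrite ?ltr0n ?exprn_gt0 ?ltr0n //.
- by rewrite th_weight_norm ltn_addl.
- lia.
- by rewrite -natrX -natrM ltr_nat th_weight_norm_lt.
Qed.
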